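(* For every integer $n\geq1$ the function $$p_n(t)=\frac{1}{t^2}\sum_{k=1}^\infty(2\pi k)^{1-2n}\left(\frac{4\pi k}{t^2+(2\pi k)^2}+\frac{8\pi kt}{(t^2+(2\pi k)^2)^2}+\frac{2n-1}{2\pi k}\,\frac{2t}{t^2+(2\pi k)^2}\right),\qquad t>0,$$ is completely monotonic on $(0,\infty)$.
   Context: A function $g$ on $(0,\infty)$ is completely monotonic if it is $C^\infty$ and $(-1)^mg^{(m)}(t)\geq0$ for all $m\geq0$ and $t>0$. *)

From Stdlib Require Import Reals.
From Coquelicot Require Import Coquelicot.
Open Scope R_scope.

Definition completely_monotonic (g : R -> R) : Prop :=
  forall (m : nat) (t : R), 0 < t ->
    ex_derive_n g m t /\ 0 <= (-1) ^ m * Derive_n g m t.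

Definition pn_term (n : nat) (t : R) (k : R) : R :=
  let a := 2 * PI * k in
  / a ^ (2 * n - 1) *
  ( 4 * PI * k / (t ^ 2 + a ^ 2)
  + 8 * PI * k * t / (t ^ 2 + a ^ 2) ^ 2
  + (2 * INR n - 1) / a * (2 * t / (t ^ 2 + a ^ 2)) ).

(* p_n(t) = t^{-2} * sum_{k>=1} pn_term n t k ; the series index j >= 0
   corresponds to k = j + 1. *)
Definition p_n (n : nat) (t : R) : R :=
  / t ^ 2 * Series (fun j : nat => pn_term n t (INR (S j))).

(* Write a = 2 pi k, u = t^2 + a^2 and c = 2n - 1.  The k-th summand of p_n is
   2 a^(-2n) (c/(t u) + a^2/(t^2 u) + 2 a^2/(t u^2)), and for a >= 2 this is the
   nonnegative combination  c F + 2a F G + (a^2 - 2a) H  (times 2 a^(-2n)) of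
   F = 1/(t u), G = 1/t + a/u, H = 1/(t^2 u) and the product F G.  The m-th
   derivatives of F, G, H are combinations of (-1)^m m!/t^(m+1) and of the real
   and imaginary parts of (-1)^m m!/(t + i a)^(m+1), whose modulus is at most
   m!/t^(m+1); this gives the alternating signs, and the Leibniz rule carries
   them over to F G.  Finally a completely monotonic g satisfies
   (-1)^m g^(m)(y) <= (2^m/y)^m g(y/2^m), which bounds the m-th derivative of
   the k-th summand on [d, oo) by a constant times 1/(k(k+1)), so the series
   may be differentiated termwise. *)

From Stdlib Require Import Reals.
From Coquelicot Require Import Coquelicot.
Open Scope R_scope.
From Stdlib Require Import Lra Lia Factorial.

Definition derivative_family (G : nat -> R -> R) : Prop :=
  forall m t, 0 < t -> is_derive (G m) t (G (S m) t).

Definition alternating (G : nat -> R -> R) : Prop :=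
  forall m t, 0 < t -> 0 <= (-1) ^ m * G m t.

Lemma Derive_n_of_family (f : R -> R) (G : nat -> R -> R) :
  (forall t, 0 < t -> f t = G O t) -> derivative_family G ->
  forall m t, 0 < t -> ex_derive_n f m t /\ Derive_n f m t = G m t.
Proof.
  intros Hf HG m. induction m as [|m IH]; intros t Ht.
  - split; [exact I | apply Hf, Ht].
  - assert (Hd : is_derive (Derive_n f m) t (G (S m) t)).
    { apply (is_derive_ext_loc (G m)).
      - apply (filter_imp (fun s => 0 < s)); [|exact (open_gt 0 t Ht)].
        intros s Hs. symmetry. apply (IH s Hs).
      - apply HG, Ht. }
    split; [eexists; exact Hd | apply is_derive_unique, Hd].
Qed.

Lemma completely_monotonic_of_family (f : R -> R) (G : nat -> R -> R) :
  (forall t, 0 < t -> f t = G O t) -> derivative_family G -> alternating G ->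
  completely_monotonic f.
Proof.
  intros Hf HG HA m t Ht.
  destruct (Derive_n_of_family f G Hf HG m t Ht) as [Hex ->].
  split; [exact Hex | apply HA, Ht].
Qed.

Lemma alternating_of_sign_form (G g : nat -> R -> R) :
  (forall m t, 0 < t -> G m t = (-1) ^ m * g m t) ->
  (forall m t, 0 < t -> 0 <= g m t) -> alternating G.
Proof.
  intros HG Hg m t Ht. rewrite HG by exact Ht.
  replace ((-1) ^ m * ((-1) ^ m * g m t)) with ((-1 * -1) ^ m * g m t)
    by (rewrite Rpow_mult_distr; ring).
  replace (-1 * -1) with 1 by ring. rewrite pow1, Rmult_1_l. apply Hg, Ht.
Qed.

Definition shift_opp (G : nat -> R -> R) : nat -> R -> R := fun m t => - G (S m) t.

Lemma derivative_family_shift_opp G :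
  derivative_family G -> derivative_family (shift_opp G).
Proof. intros HG m t Ht. apply (is_derive_opp (G (S m))), HG, Ht. Qed.

Lemma alternating_shift_opp G : alternating G -> alternating (shift_opp G).
Proof.
  intros HG m t Ht. unfold shift_opp.
  replace ((-1) ^ m * - G (S m) t) with ((-1) ^ S m * G (S m) t) by (simpl; ring).
  apply HG, Ht.
Qed.

(* The Leibniz rule, unexpanded: the binary tree of all ways to distribute m
   derivatives between the two factors. *)
Fixpoint prod_family (F G : nat -> R -> R) (m : nat) (t : R) : R :=
  match m with
  | O => F O t * G O t
  | S m => prod_family (fun k => F (S k)) G m t + prod_family F (fun k => G (S k)) m t
  end.

Lemma derivative_family_prod F G :
  derivative_family F -> derivative_family G -> derivative_family (prod_family F G).
Proof.
  intros HF HG m. revert F G HF HG.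
  induction m as [|m IH]; intros F G HF HG t Ht; simpl.
  - apply (is_derive_mult (F O) (G O)); [apply HF, Ht | apply HG, Ht | apply Rmult_comm].
  - apply (is_derive_plus (prod_family (fun k => F (S k)) G m)
                          (prod_family F (fun k => G (S k)) m)).
    + apply IH; [intros k; apply HF | exact HG | exact Ht].
    + apply IH; [exact HF | intros k; apply HG | exact Ht].
Qed.

Lemma prod_family_opp_l F G m t :
  prod_family (fun k s => - F k s) G m t = - prod_family F G m t.
Proof.
  revert F G. induction m as [|m IH]; intros F G; simpl; [ring|].
  rewrite (IH (fun k => F (S k)) G), (IH F (fun k => G (S k))). ring.
Qed.

Lemma prod_family_opp_r F G m t :
  prod_family F (fun k s => - G k s) m t = - prod_family F G m t.
Proof.
  revert F G. induction m as [|m IH]; intros F G; simpl; [ring|].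
  rewrite (IH (fun k => F (S k)) G), (IH F (fun k => G (S k))). ring.
Qed.

Lemma alternating_prod F G :
  alternating F -> alternating G -> alternating (prod_family F G).
Proof.
  intros HF HG m. revert F G HF HG.
  induction m as [|m IH]; intros F G HF HG t Ht.
  - specialize (HF O t Ht). specialize (HG O t Ht). simpl in *. nra.
  - assert (H1 := IH _ _ (alternating_shift_opp F HF) HG t Ht).
    assert (H2 := IH _ _ HF (alternating_shift_opp G HG) t Ht).
    rewrite (prod_family_opp_l (fun k => F (S k))) in H1.
    rewrite (prod_family_opp_r F (fun k => G (S k))) in H2.
    simpl. lra.
Qed.

Lemma Rabs_alternating G : alternating G ->
  forall m t, 0 < t -> Rabs (G m t) = (-1) ^ m * G m t.
Proof.
  intros HG m t Ht.
  rewrite <- (Rmult_1_l (Rabs _)), <- (pow_1_abs m), <- Rabs_mult.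
  apply Rabs_pos_eq, HG, Ht.
Qed.

(** * Derivative bounds for completely monotonic families *)

Lemma nonincreasing_of_derive_nonpos (f df : R -> R) (a b : R) : a <= b ->
  (forall s, a <= s <= b -> is_derive f s (df s)) ->
  (forall s, a <= s <= b -> df s <= 0) -> f b <= f a.
Proof.
  intros Hab Hd Hneg.
  destruct (MVT_gen f a b df) as [c [Hc Heq]];
    rewrite ?Rmin_left, ?Rmax_right in * by exact Hab.
  - intros s Hs. apply Hd. lra.
  - intros s Hs. apply continuity_pt_filterlim, (ex_derive_continuous f).
    eexists. apply Hd, Hs.
  - assert (df c * (b - a) <= 0) by (apply Rmult_le_0_r; [apply Hneg, Hc | lra]). lra.
Qed.

(* Since G 1 is nondecreasing, G 0 (y/2) >= G 0 (y/2) - G 0 y >= - (y/2) G 1 y. *)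
Lemma alternating_derive_le G : derivative_family G -> alternating G ->
  forall y, 0 < y -> - G 1%nat y <= 2 / y * G O (y / 2).
Proof.
  intros HG HA y Hy.
  assert (Hmono : forall s, y / 2 <= s <= y -> G 1%nat s <= G 1%nat y).
  { intros s Hs.
    enough (- G 1%nat y <= - G 1%nat s) by lra.
    apply (nonincreasing_of_derive_nonpos (fun x => - G 1%nat x) (fun x => - G 2%nat x));
      [lra | intros x Hx | intros x Hx].
    - apply (is_derive_opp (G 1%nat)), HG. lra.
    - specialize (HA 2%nat x ltac:(lra)). simpl in HA. lra. }
  assert (Hpsi : G O y - y * G 1%nat y <= G O (y / 2) - y / 2 * G 1%nat y).
  { apply (nonincreasing_of_derive_nonpos (fun x => G O x - x * G 1%nat y)
      (fun x => G 1%nat x - G 1%nat y)); [lra | intros x Hx | intros x Hx].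
    - apply (is_derive_minus (G O) (fun x => x * G 1%nat y)).
      + apply HG. lra.
      + auto_derive; [exact I | ring].
    - specialize (Hmono x Hx). lra. }
  assert (H0 := HA O y Hy). simpl in H0.
  apply (Rmult_le_reg_l (y / 2)); [lra|].
  replace (y / 2 * (2 / y * G O (y / 2))) with (G O (y / 2)) by (field; lra).
  lra.
Qed.

Lemma alternating_derive_n_le G : derivative_family G -> alternating G ->
  forall m y, 0 < y -> (-1) ^ m * G m y <= (2 ^ m / y) ^ m * G O (y / 2 ^ m).
Proof.
  intros HG HA m. revert G HG HA.
  induction m as [|m IH]; intros G HG HA y Hy.
  - simpl. replace (y / 1) with y by field. lra.
  - assert (Hpow : 0 < 2 ^ m) by (apply pow_lt; lra).
    assert (Hym : 0 < y / 2 ^ m) by (apply Rdiv_lt_0_compat; lra).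
    assert (IHG := IH (shift_opp G) (derivative_family_shift_opp G HG)
                      (alternating_shift_opp G HA) y Hy).
    unfold shift_opp in IHG.
    replace ((-1) ^ S m * G (S m) y) with ((-1) ^ m * - G (S m) y) by (simpl; ring).
    assert (Hstep := alternating_derive_le G HG HA (y / 2 ^ m) Hym).
    replace (y / 2 ^ m / 2) with (y / 2 ^ S m) in Hstep by (simpl; field; lra).
    replace (2 / (y / 2 ^ m)) with (2 ^ S m / y) in Hstep by (simpl; field; lra).
    assert (H1 := HA 1%nat (y / 2 ^ m) Hym). simpl in H1.
    assert (Hle : (2 ^ m / y) ^ m <= (2 ^ S m / y) ^ m).
    { apply pow_incr. split; [apply Rlt_le, Rdiv_lt_0_compat; lra|].
      apply Rmult_le_compat_r; [apply Rlt_le, Rinv_0_lt_compat, Hy | simpl; lra]. }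
    assert (Hc : 0 <= (2 ^ m / y) ^ m) by (apply pow_le, Rlt_le, Rdiv_lt_0_compat; lra).
    eapply Rle_trans; [exact IHG|].
    replace ((2 ^ S m / y) ^ S m) with ((2 ^ S m / y) ^ m * (2 ^ S m / y)) by (simpl; ring).
    rewrite Rmult_assoc.
    apply Rmult_le_compat; [exact Hc | lra | exact Hle | exact Hstep].
Qed.

(** * Negative powers of t + i a *)

(* (Re, Im) of (t + i a)^-n. *)
Fixpoint inv_pow (a t : R) (n : nat) : R * R :=
  match n with
  | O => (1, 0)
  | S n => ((t * fst (inv_pow a t n) + a * snd (inv_pow a t n)) / (t ^ 2 + a ^ 2),
            (t * snd (inv_pow a t n) - a * fst (inv_pow a t n)) / (t ^ 2 + a ^ 2))
  end.

Definition re_inv_pow (a : R) (n : nat) (t : R) : R := fst (inv_pow a t n).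
Definition im_inv_pow (a : R) (n : nat) (t : R) : R := snd (inv_pow a t n).

Lemma re_inv_pow_S a n t : re_inv_pow a (S n) t =
  (t * re_inv_pow a n t + a * im_inv_pow a n t) / (t ^ 2 + a ^ 2).
Proof. reflexivity. Qed.

Lemma im_inv_pow_S a n t : im_inv_pow a (S n) t =
  (t * im_inv_pow a n t - a * re_inv_pow a n t) / (t ^ 2 + a ^ 2).
Proof. reflexivity. Qed.

Lemma is_derive_inv_pow a n t : 0 < t ->
  is_derive (re_inv_pow a n) t (- INR n * re_inv_pow a (S n) t) /\
  is_derive (im_inv_pow a n) t (- INR n * im_inv_pow a (S n) t).
Proof.
  intros Ht. induction n as [|n [HX HY]].
  - split; unfold re_inv_pow, im_inv_pow; simpl; auto_derive; auto; ring.
  - assert (Hu : t ^ 2 + a ^ 2 <> 0) by nra.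
    assert (DX : Derive (fun s => re_inv_pow a n s) t = - INR n * re_inv_pow a (S n) t)
      by (apply is_derive_unique, HX).
    assert (DY : Derive (fun s => im_inv_pow a n s) t = - INR n * im_inv_pow a (S n) t)
      by (apply is_derive_unique, HY).
    rewrite !re_inv_pow_S, !im_inv_pow_S, S_INR. split.
    + apply (is_derive_ext
               (fun s => (s * re_inv_pow a n s + a * im_inv_pow a n s) / (s ^ 2 + a ^ 2)));
        [reflexivity|].
      auto_derive; [repeat split; try (eexists; eassumption); exact Hu|].
      rewrite DX, DY, re_inv_pow_S, im_inv_pow_S. field. exact Hu.
    + apply (is_derive_ext
               (fun s => (s * im_inv_pow a n s - a * re_inv_pow a n s) / (s ^ 2 + a ^ 2)));
        [reflexivity|].
      auto_derive; [repeat split; try (eexists; eassumption); exact Hu|].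
      rewrite DX, DY, re_inv_pow_S, im_inv_pow_S. field. exact Hu.
Qed.

Lemma inv_pow_norm a n t : t ^ 2 + a ^ 2 <> 0 ->
  (re_inv_pow a n t)² + (im_inv_pow a n t)² = / (t ^ 2 + a ^ 2) ^ n.
Proof.
  intros Hu. induction n as [|n IH].
  - unfold re_inv_pow, im_inv_pow, Rsqr. simpl. field.
  - change ((t ^ 2 + a ^ 2) ^ S n) with ((t ^ 2 + a ^ 2) * (t ^ 2 + a ^ 2) ^ n).
    rewrite re_inv_pow_S, im_inv_pow_S, Rinv_mult, <- IH.
    unfold Rsqr. field. exact Hu.
Qed.

Lemma inv_pow_le a n t : 0 < t ->
  Rabs (re_inv_pow a n t) <= / t ^ n /\ Rabs (im_inv_pow a n t) <= / t ^ n.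
Proof.
  intros Ht.
  assert (Htn : 0 < / t ^ n) by (apply Rinv_0_lt_compat, pow_lt, Ht).
  rewrite <- (Rabs_pos_eq (/ t ^ n)) by lra.
  apply triangle_rectangle_le.
  rewrite inv_pow_norm by nra.
  unfold Rsqr. rewrite <- Rinv_mult, <- Rpow_mult_distr.
  apply Rinv_le_contravar; [apply pow_lt; nra|].
  apply pow_incr. nra.
Qed.

Lemma im_inv_pow_le a n t : 0 <= a -> 0 < t ->
  Rabs (im_inv_pow a n t) <= INR n * a / t ^ S n.
Proof.
  intros Ha Ht. induction n as [|n IH].
  - unfold im_inv_pow. simpl. rewrite Rabs_R0. lra.
  - destruct (inv_pow_le a n t Ht) as [HX _].
    assert (Htn : 0 < t ^ n) by (apply pow_lt, Ht).
    assert (Hnum : Rabs (t * im_inv_pow a n t - a * re_inv_pow a n t) <= INR (S n) * a / t ^ n).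
    { eapply Rle_trans; [apply Rabs_triang|].
      rewrite Rabs_Ropp, !Rabs_mult, (Rabs_pos_eq t), (Rabs_pos_eq a) by lra.
      replace (INR (S n) * a / t ^ n) with (t * (INR n * a / t ^ S n) + a * / t ^ n)
        by (rewrite S_INR; simpl; field; lra).
      apply Rplus_le_compat; apply Rmult_le_compat_l; lra. }
    rewrite im_inv_pow_S. unfold Rdiv at 1.
    rewrite Rabs_mult, Rabs_inv, (Rabs_pos_eq (t ^ 2 + a ^ 2)) by nra.
    apply Rle_trans with (INR (S n) * a / t ^ n * / t ^ 2).
    + apply Rmult_le_compat; [apply Rabs_pos | apply Rlt_le, Rinv_0_lt_compat; nra | exact Hnum |].
      apply Rinv_le_contravar; nra.
    + right. simpl. field. lra.
Qed.

Lemma inv_pow_a0 n t : 0 < t -> re_inv_pow 0 n t = / t ^ n /\ im_inv_pow 0 n t = 0.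
Proof.
  intros Ht. induction n as [|n [IHX IHY]].
  - split; [unfold re_inv_pow; simpl; symmetry; apply Rinv_1 | reflexivity].
  - assert (Htn : t ^ n <> 0) by (apply pow_nonzero; lra).
    rewrite re_inv_pow_S, im_inv_pow_S, IHX, IHY. simpl. split; field; lra.
Qed.

Lemma fact_S_INR m : INR (fact (S m)) = INR (S m) * INR (fact m).
Proof. apply mult_INR. Qed.

Definition inv_power_family (f : nat -> R -> R) (m : nat) (t : R) : R :=
  (-1) ^ m * INR (fact m) * f (S m) t.

Lemma derivative_family_inv_power (f : nat -> R -> R) :
  (forall n t, 0 < t -> is_derive (f n) t (- INR n * f (S n) t)) ->
  derivative_family (inv_power_family f).
Proof.
  intros Hf m t Ht. unfold inv_power_family.
  replace ((-1) ^ S m * INR (fact (S m)) * f (S (S m)) t)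
    with ((-1) ^ m * INR (fact m) * (- INR (S m) * f (S (S m)) t))
    by (rewrite fact_S_INR; simpl; ring).
  apply is_derive_scal, Hf, Ht.
Qed.

Definition re_inv_family (a : R) : nat -> R -> R := inv_power_family (re_inv_pow a).
Definition im_inv_family (a : R) : nat -> R -> R := inv_power_family (im_inv_pow a).

Lemma derivative_family_re_inv a : derivative_family (re_inv_family a).
Proof.
  apply derivative_family_inv_power. intros n t Ht. apply (is_derive_inv_pow a n t Ht).
Qed.

Lemma derivative_family_im_inv a : derivative_family (im_inv_family a).
Proof.
  apply derivative_family_inv_power. intros n t Ht. apply (is_derive_inv_pow a n t Ht).
Qed.

(** * The summands *)

(* With u = t^2 + a^2, at order 0 these are 1/(t u), 1/(t^2 u) and 1/t + a/u. *)
Definition inv_tu_family (a : R) (m : nat) (t : R) : R :=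
  / a ^ 2 * (re_inv_family 0 m t - re_inv_family a m t).
Definition inv_t2u_family (a : R) (m : nat) (t : R) : R :=
  / a ^ 2 * (- re_inv_family 0 (S m) t + / a * im_inv_family a m t).
Definition inv_t_add_family (a : R) (m : nat) (t : R) : R :=
  re_inv_family 0 m t - im_inv_family a m t.

Lemma derivative_family_inv_tu a : derivative_family (inv_tu_family a).
Proof.
  intros m t Ht. apply is_derive_scal, (is_derive_minus (re_inv_family 0 m) (re_inv_family a m));
    apply derivative_family_re_inv, Ht.
Qed.

Lemma derivative_family_inv_t2u a : derivative_family (inv_t2u_family a).
Proof.
  intros m t Ht. apply is_derive_scal.
  apply (is_derive_plus (fun s => - re_inv_family 0 (S m) s) (fun s => / a * im_inv_family a m s)).
  - apply (is_derive_opp (re_inv_family 0 (S m))), derivative_family_re_inv, Ht.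
  - apply is_derive_scal, derivative_family_im_inv, Ht.
Qed.

Lemma derivative_family_inv_t_add a : derivative_family (inv_t_add_family a).
Proof.
  intros m t Ht. apply (is_derive_minus (re_inv_family 0 m) (im_inv_family a m));
    [apply derivative_family_re_inv | apply derivative_family_im_inv]; exact Ht.
Qed.

Lemma re_inv_family_a0 m t : 0 < t ->
  re_inv_family 0 m t = (-1) ^ m * INR (fact m) * / t ^ S m.
Proof.
  intros Ht. unfold re_inv_family, inv_power_family.
  rewrite (proj1 (inv_pow_a0 (S m) t Ht)). reflexivity.
Qed.

Lemma alternating_inv_tu a : 0 < a -> alternating (inv_tu_family a).
Proof.
  intros Ha. apply (alternating_of_sign_form _
    (fun m t => / a ^ 2 * INR (fact m) * (/ t ^ S m - re_inv_pow a (S m) t))).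
  - intros m t Ht. unfold inv_tu_family. rewrite re_inv_family_a0 by exact Ht.
    unfold re_inv_family, inv_power_family. ring.
  - intros m t Ht.
    destruct (inv_pow_le a (S m) t Ht) as [HX _].
    assert (re_inv_pow a (S m) t <= Rabs (re_inv_pow a (S m) t)) by apply Rle_abs.
    apply Rmult_le_pos; [apply Rmult_le_pos|lra].
    + apply Rlt_le, Rinv_0_lt_compat, pow_lt, Ha.
    + apply pos_INR.
Qed.

Lemma alternating_inv_t_add a : alternating (inv_t_add_family a).
Proof.
  apply (alternating_of_sign_form _
    (fun m t => INR (fact m) * (/ t ^ S m - im_inv_pow a (S m) t))).
  - intros m t Ht. unfold inv_t_add_family. rewrite re_inv_family_a0 by exact Ht.
    unfold im_inv_family, inv_power_family. ring.
  - intros m t Ht.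
    destruct (inv_pow_le a (S m) t Ht) as [_ HY].
    assert (im_inv_pow a (S m) t <= Rabs (im_inv_pow a (S m) t)) by apply Rle_abs.
    apply Rmult_le_pos; [apply pos_INR | lra].
Qed.

Lemma alternating_inv_t2u a : 0 < a -> alternating (inv_t2u_family a).
Proof.
  intros Ha. apply (alternating_of_sign_form _
    (fun m t => / a ^ 2 * (INR (fact (S m)) * / t ^ S (S m)
                           + / a * INR (fact m) * im_inv_pow a (S m) t))).
  - intros m t Ht. unfold inv_t2u_family. rewrite re_inv_family_a0 by exact Ht.
    unfold im_inv_family, inv_power_family. rewrite <- (tech_pow_Rmult (-1) m). ring.
  - intros m t Ht.
    assert (HY := im_inv_pow_le a (S m) t (Rlt_le _ _ Ha) Ht).
    assert (- im_inv_pow a (S m) t <= Rabs (im_inv_pow a (S m) t))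
      by (rewrite <- Rabs_Ropp; apply Rle_abs).
    apply Rmult_le_pos; [apply Rlt_le, Rinv_0_lt_compat, pow_lt, Ha|].
    rewrite fact_S_INR.
    assert (Hf : 0 < INR (fact m)) by apply INR_fact_lt_0.
    assert (Hia : 0 < / a) by (apply Rinv_0_lt_compat, Ha).
    replace (INR (S m) * INR (fact m) * / t ^ S (S m))
      with (/ a * INR (fact m) * (INR (S m) * a / t ^ S (S m)))
      by (field; split; [apply pow_nonzero|]; lra).
    rewrite <- Rmult_plus_distr_l. apply Rmult_le_pos; [nra | lra].
Qed.

Definition summand_family (a c : R) (m : nat) (t : R) : R :=
  c * inv_tu_family a m t
  + 2 * a * prod_family (inv_tu_family a) (inv_t_add_family a) m t
  + (a ^ 2 - 2 * a) * inv_t2u_family a m t.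

Lemma derivative_family_summand a c : derivative_family (summand_family a c).
Proof.
  intros m t Ht. unfold summand_family.
  apply (is_derive_plus (fun s => c * inv_tu_family a m s
                                  + 2 * a * prod_family (inv_tu_family a) (inv_t_add_family a) m s)
                        (fun s => (a ^ 2 - 2 * a) * inv_t2u_family a m s)).
  - apply (is_derive_plus (fun s => c * inv_tu_family a m s)
             (fun s => 2 * a * prod_family (inv_tu_family a) (inv_t_add_family a) m s));
      apply is_derive_scal.
    + apply derivative_family_inv_tu, Ht.
    + apply derivative_family_prod;
        [apply derivative_family_inv_tu | apply derivative_family_inv_t_add | exact Ht].
  - apply is_derive_scal, derivative_family_inv_t2u, Ht.
Qed.

Lemma alternating_summand a c : 2 <= a -> 0 <= c -> alternating (summand_family a c).
Proof.
  intros Ha Hc m t Ht. unfold summand_family.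
  assert (H1 := alternating_inv_tu a ltac:(lra) m t Ht).
  assert (H2 := alternating_prod _ _ (alternating_inv_tu a ltac:(lra))
                  (alternating_inv_t_add a) m t Ht).
  assert (H3 := alternating_inv_t2u a ltac:(lra) m t Ht).
  assert (0 <= a ^ 2 - 2 * a) by nra.
  replace ((-1) ^ m * (c * inv_tu_family a m t
      + 2 * a * prod_family (inv_tu_family a) (inv_t_add_family a) m t
      + (a ^ 2 - 2 * a) * inv_t2u_family a m t))
    with (c * ((-1) ^ m * inv_tu_family a m t)
      + 2 * a * ((-1) ^ m * prod_family (inv_tu_family a) (inv_t_add_family a) m t)
      + (a ^ 2 - 2 * a) * ((-1) ^ m * inv_t2u_family a m t)) by ring.
  repeat apply Rplus_le_le_0_compat; apply Rmult_le_pos; lra.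
Qed.

Lemma summand_family_0 a c t : 0 < a -> 0 < t ->
  summand_family a c O t =
  c / (t * (t ^ 2 + a ^ 2)) + a ^ 2 / (t ^ 2 * (t ^ 2 + a ^ 2))
  + 2 * a ^ 2 / (t * (t ^ 2 + a ^ 2) ^ 2).
Proof.
  intros Ha Ht.
  unfold summand_family, inv_tu_family, inv_t2u_family, inv_t_add_family,
    re_inv_family, im_inv_family, inv_power_family, re_inv_pow, im_inv_pow.
  cbn [prod_family inv_pow fst snd fact pow INR Nat.mul Nat.add].
  field. repeat split; nra.
Qed.

Lemma summand_family_0_le a c t e : 1 <= a -> 0 <= c -> 0 < e <= t ->
  summand_family a c O t <= / e ^ 2 + (c + 2) / e.
Proof.
  intros Ha Hc [He Het].
  assert (Ht : 0 < t) by lra.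
  rewrite summand_family_0 by lra.
  set (u := t ^ 2 + a ^ 2).
  assert (Hau : a ^ 2 <= u) by (unfold u; nra).
  assert (Hu : 1 <= u) by nra.
  assert (B1 : c / (t * u) <= c / t).
  { apply Rle_div_l; [nra|]. replace (c / t * (t * u)) with (c * u) by (field; lra). nra. }
  assert (B2 : a ^ 2 / (t ^ 2 * u) <= / t ^ 2).
  { apply Rle_div_l; [nra|]. replace (/ t ^ 2 * (t ^ 2 * u)) with u by (field; lra). exact Hau. }
  assert (B3 : 2 * a ^ 2 / (t * u ^ 2) <= 2 / t).
  { apply Rle_div_l; [apply Rmult_lt_0_compat; [lra | apply pow_lt; lra]|].
    replace (2 / t * (t * u ^ 2)) with (2 * u ^ 2) by (field; lra).
    assert (u <= u * u) by nra. simpl. lra. }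
  assert (Hinv : / t <= / e) by (apply Rinv_le_contravar; lra).
  assert (Hinv2 : / t ^ 2 <= / e ^ 2)
    by (apply Rinv_le_contravar; [apply pow_lt | apply pow_incr]; lra).
  assert (Hc2 : (c + 2) / t <= (c + 2) / e) by (apply Rmult_le_compat_l; lra).
  replace ((c + 2) / t) with (c / t + 2 / t) in Hc2 by (field; lra).
  lra.
Qed.

(** * Termwise differentiation of series *)

Lemma ex_series_dominated (a M : nat -> R) (K : R) :
  ex_series M -> (forall j, Rabs (a j) <= K * M j) -> ex_series a.
Proof.
  intros HM Ha. apply (ex_series_le a (fun j => K * M j)); [exact Ha|].
  exact (ex_series_scal_l K M HM).
Qed.

Lemma Series_dominated (a M : nat -> R) (K : R) :
  ex_series M -> (forall j, Rabs (a j) <= K * M j) -> Rabs (Series a) <= K * Series M.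
Proof.
  intros HM Ha. rewrite <- Series_scal_l.
  eapply Rle_trans; [apply Series_Rabs|].
  - apply (ex_series_dominated _ M K HM). intros j. rewrite Rabs_Rabsolu. apply Ha.
  - apply Series_le; [intros j; split; [apply Rabs_pos | apply Ha]|].
    exact (ex_series_scal_l K M HM).
Qed.

Lemma ex_series_telescoping (u : nat -> R) (l : R) :
  is_lim_seq u l -> ex_series (fun j => u j - u (S j)).
Proof.
  intros Hu. exists (u O - l).
  assert (Hsum : is_lim_seq (sum_n (fun j => u j - u (S j))) (u O - l)).
  { apply (is_lim_seq_ext (fun n => u O - u (S n))).
    - intros n. induction n as [|n IH]; [rewrite sum_O; reflexivity|].
      rewrite sum_Sn, <- IH. unfold plus. simpl. ring.
    - apply (is_lim_seq_minus' _ _ (u O) l); [apply is_lim_seq_const|].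
      apply (is_lim_seq_incr_1 u), Hu. }
  exact Hsum.
Qed.

Lemma ex_series_inv_consecutive : ex_series (fun j => / (INR (S j) * INR (S (S j)))).
Proof.
  apply (ex_series_ext (fun j => / INR (S j) - / INR (S (S j)))).
  - intros j.
    assert (0 < INR (S j)) by apply lt_0_INR, Nat.lt_0_succ.
    assert (E : / INR (S j) - / INR (S (S j)) = / (INR (S j) * INR (S (S j))))
      by (rewrite (S_INR (S j)); field; lra).
    exact E.
  - apply (ex_series_telescoping (fun j => / INR (S j)) 0).
    apply (is_lim_seq_incr_1 (fun n => / INR n)).
    replace (Finite 0) with (Rbar_inv p_infty) by reflexivity.
    apply is_lim_seq_inv; [exact is_lim_seq_INR | discriminate].
Qed.

Lemma remainder2_le (g g1 g2 : R -> R) (t r B : R) :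
  (forall s, Rabs (s - t) <= r ->
     is_derive g s (g1 s) /\ is_derive g1 s (g2 s) /\ Rabs (g2 s) <= B) ->
  forall h, Rabs h <= r -> Rabs (g (t + h) - g t - h * g1 t) <= B * h ^ 2.
Proof.
  intros Hg h Hh.
  assert (HB : 0 <= B).
  { destruct (Hg t) as [_ [_ H]].
    - rewrite Rminus_diag, Rabs_R0. eapply Rle_trans; [apply Rabs_pos | exact Hh].
    - eapply Rle_trans; [apply Rabs_pos | exact H]. }
  assert (Hg1 : forall s, Rabs (s - t) <= Rabs h -> Rabs (g1 s - g1 t) <= B * Rabs h).
  { intros s Hs.
    eapply Rle_trans; [apply (bounded_variation g1 g2 B t s)|].
    - intros x Hx. apply Hg. lra.
    - apply Rmult_le_compat_l; [exact HB | exact Hs]. }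
  replace (g (t + h) - g t - h * g1 t)
    with ((g (t + h) - (t + h) * g1 t) - (g t - t * g1 t)) by ring.
  replace (B * h ^ 2) with (B * Rabs h * Rabs (t + h - t))
    by (rewrite Rplus_minus_l, Rmult_assoc, <- Rabs_mult, Rabs_pos_eq by nra; ring).
  apply (bounded_variation (fun s => g s - s * g1 t) (fun s => g1 s - g1 t)).
  intros s Hs. rewrite Rplus_minus_l in Hs. split; [|apply Hg1, Hs].
  apply (is_derive_minus g (fun s => s * g1 t)); [apply Hg; lra|].
  auto_derive; [exact I | ring].
Qed.

Lemma is_derive_of_remainder2 (f : R -> R) (t l C r : R) : 0 < r ->
  (forall h, Rabs h <= r -> Rabs (f (t + h) - f t - h * l) <= C * h ^ 2) ->
  is_derive f t l.
Proof.
  intros Hr Hf. apply is_derive_Reals. intros eps Heps.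
  assert (HC1 : 0 < Rabs C + 1) by (pose proof (Rabs_pos C); lra).
  assert (Hd : 0 < Rmin r (eps / (Rabs C + 1)))
    by (apply Rmin_pos; [exact Hr | apply Rdiv_lt_0_compat; lra]).
  exists (mkposreal _ Hd). intros h Hh0 Hh. simpl in Hh.
  assert (Hhr : Rabs h <= r) by (eapply Rle_trans; [left; exact Hh | apply Rmin_l]).
  assert (Hhe : Rabs h < eps / (Rabs C + 1)) by (eapply Rlt_le_trans; [exact Hh | apply Rmin_r]).
  assert (Hpos : 0 < Rabs h) by (apply Rabs_pos_lt, Hh0).
  replace ((f (t + h) - f t) / h - l) with ((f (t + h) - f t - h * l) / h) by (field; exact Hh0).
  unfold Rdiv. rewrite Rabs_mult, Rabs_inv.
  apply (Rmult_lt_reg_r (Rabs h)); [exact Hpos|].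
  rewrite Rmult_assoc, Rinv_l, Rmult_1_r by lra.
  eapply Rle_lt_trans; [apply Hf, Hhr|].
  assert (HC : Rabs h * (Rabs C + 1) < eps)
    by (apply Rlt_div_r; [exact HC1 | exact Hhe]).
  rewrite <- (pow2_abs h).
  pose proof (Rle_abs C). nra.
Qed.

Lemma is_derive_Series (g g1 g2 : nat -> R -> R) (M : nat -> R) (K0 K1 K2 t r : R) :
  0 < r -> ex_series M ->
  (forall j s, Rabs (s - t) <= r ->
     is_derive (g j) s (g1 j s) /\ is_derive (g1 j) s (g2 j s) /\
     Rabs (g j s) <= K0 * M j /\ Rabs (g1 j s) <= K1 * M j /\ Rabs (g2 j s) <= K2 * M j) ->
  is_derive (fun s => Series (fun j => g j s)) t (Series (fun j => g1 j t)).
Proof.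
  intros Hr HM Hg.
  apply (is_derive_of_remainder2 _ t _ (K2 * Series M) r Hr). intros h Hh.
  assert (Ht : Rabs (t - t) <= r) by (rewrite Rminus_diag, Rabs_R0; lra).
  assert (Hth : Rabs (t + h - t) <= r) by (rewrite Rplus_minus_l; exact Hh).
  assert (E0 : ex_series (fun j => g j (t + h)))
    by (apply (ex_series_dominated _ M K0 HM); intros j; apply Hg, Hth).
  assert (E1 : ex_series (fun j => g j t))
    by (apply (ex_series_dominated _ M K0 HM); intros j; apply Hg, Ht).
  assert (E2 : ex_series (fun j => h * g1 j t)).
  { apply (ex_series_scal_l h (fun j => g1 j t)).
    apply (ex_series_dominated _ M K1 HM). intros j. apply Hg, Ht. }
  assert (Hrem : forall j, Rabs (g j (t + h) - g j t - h * g1 j t) <= K2 * h ^ 2 * M j).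
  { intros j. replace (K2 * h ^ 2 * M j) with (K2 * M j * h ^ 2) by ring.
    apply (remainder2_le (g j) (g1 j) (g2 j) t r); [|exact Hh].
    intros s Hs. destruct (Hg j s Hs) as [H1 [H2 [_ [_ H3]]]]. auto. }
  assert (E01 : ex_series (fun j => g j (t + h) - g j t)) by exact (ex_series_minus _ _ E0 E1).
  rewrite <- Series_scal_l, <- Series_minus, <- Series_minus by assumption.
  replace (K2 * Series M * h ^ 2) with (K2 * h ^ 2 * Series M) by ring.
  apply Series_dominated; [exact HM | exact Hrem].
Qed.

Lemma derivative_family_Series (H : nat -> nat -> R -> R) (M : nat -> R) :
  (forall j, derivative_family (H j)) -> ex_series M ->
  (forall i d, 0 < d -> exists K, forall j s, d <= s -> Rabs (H j i s) <= K * M j) ->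
  derivative_family (fun m t => Series (fun j => H j m t)).
Proof.
  intros HH HM Hbound m t Ht.
  destruct (Hbound m (t / 2) ltac:(lra)) as [K0 B0].
  destruct (Hbound (S m) (t / 2) ltac:(lra)) as [K1 B1].
  destruct (Hbound (S (S m)) (t / 2) ltac:(lra)) as [K2 B2].
  apply (is_derive_Series (fun j => H j m) (fun j => H j (S m)) (fun j => H j (S (S m)))
           M K0 K1 K2 t (t / 2)); [lra | exact HM|].
  intros j s Hs.
  assert (Hst : t / 2 <= s) by (apply Rabs_le_between' in Hs; lra).
  split; [|split; [|split; [|split]]];
    [apply HH | apply HH | apply B0 | apply B1 | apply B2]; lra.
Qed.

Lemma alternating_Series (H : nat -> nat -> R -> R) :
  (forall j, alternating (H j)) ->
  (forall m t, 0 < t -> ex_series (fun j => H j m t)) ->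
  alternating (fun m t => Series (fun j => H j m t)).
Proof.
  intros HA HE m t Ht. rewrite <- Series_scal_l.
  replace 0 with (Series (fun j => 0 * H j m t)) by (rewrite Series_scal_l; ring).
  apply Series_le; [intros j; split; [lra | rewrite Rmult_0_l; apply HA, Ht]|].
  exact (ex_series_scal_l _ _ (HE m t Ht)).
Qed.

Definition freq (j : nat) : R := 2 * PI * INR (S j).

Lemma freq_ge j : 2 * INR (S j) <= freq j.
Proof.
  unfold freq. assert (0 < INR (S j)) by apply lt_0_INR, Nat.lt_0_succ.
  pose proof PI2_1. nra.
Qed.

Lemma freq_ge_2 j : 2 <= freq j.
Proof.
  pose proof (freq_ge j). assert (1 <= INR (S j)) by (apply (le_INR 1); lia). lra.
Qed.

Definition term_coef (n j : nat) : R := / freq j ^ (2 * n - 1) * (2 / freq j).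

Lemma term_coef_pos n j : 0 < term_coef n j.
Proof.
  pose proof (freq_ge_2 j).
  apply Rmult_lt_0_compat; [apply Rinv_0_lt_compat, pow_lt | apply Rdiv_lt_0_compat]; lra.
Qed.

Lemma term_coef_le n j : (1 <= n)%nat -> term_coef n j <= / (INR (S j) * INR (S (S j))).
Proof.
  intros Hn. unfold term_coef. pose proof (freq_ge j) as Ha.
  assert (Hj : 1 <= INR (S j)) by (apply (le_INR 1); lia).
  assert (Hpow : freq j <= freq j ^ (2 * n - 1)).
  { rewrite <- (pow_1 (freq j)) at 1. apply Rle_pow; [lra | lia]. }
  apply Rle_trans with (/ freq j * (2 / freq j)).
  { apply Rmult_le_compat_r; [apply Rlt_le, Rdiv_lt_0_compat; lra|].
    apply Rinv_le_contravar; lra. }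
  replace (/ freq j * (2 / freq j)) with (/ (freq j ^ 2 / 2)) by (field; lra).
  apply Rinv_le_contravar; [apply Rmult_lt_0_compat; apply lt_0_INR; lia|].
  rewrite (S_INR (S j)). nra.
Qed.

Definition term_family (n j : nat) (m : nat) (t : R) : R :=
  term_coef n j * summand_family (freq j) (2 * INR n - 1) m t.

Lemma term_family_0 n j t : 0 < t ->
  term_family n j O t = / t ^ 2 * pn_term n t (INR (S j)).
Proof.
  intros Ht. pose proof (freq_ge_2 j).
  unfold term_family, term_coef, pn_term. cbv zeta. fold (freq j).
  rewrite summand_family_0 by lra.
  replace (4 * PI * INR (S j)) with (2 * freq j) by (unfold freq; ring).
  replace (8 * PI * INR (S j)) with (4 * freq j) by (unfold freq; ring).
  assert (freq j ^ (2 * n - 1) <> 0) by (apply pow_nonzero; lra).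
  field. repeat split; nra.
Qed.

Lemma derivative_family_term n j : derivative_family (term_family n j).
Proof. intros m t Ht. apply is_derive_scal, derivative_family_summand, Ht. Qed.

Lemma alternating_term n j : (1 <= n)%nat -> alternating (term_family n j).
Proof.
  intros Hn m t Ht. unfold term_family.
  assert (1 <= INR n) by (apply (le_INR 1), Hn).
  pose proof (freq_ge_2 j). pose proof (term_coef_pos n j).
  replace ((-1) ^ m * (term_coef n j * summand_family (freq j) (2 * INR n - 1) m t))
    with (term_coef n j * ((-1) ^ m * summand_family (freq j) (2 * INR n - 1) m t)) by ring.
  apply Rmult_le_pos; [lra | apply alternating_summand; lra].
Qed.

Lemma term_family_le n i d : (1 <= n)%nat -> 0 < d ->
  exists K, forall j s, d <= s ->
    Rabs (term_family n j i s) <= K * / (INR (S j) * INR (S (S j))).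
Proof.
  intros Hn Hd.
  set (c := 2 * INR n - 1).
  assert (Hc : 1 <= c) by (unfold c; assert (1 <= INR n) by (apply (le_INR 1), Hn); lra).
  assert (H2i : 0 < 2 ^ i) by (apply pow_lt; lra).
  set (e := d / 2 ^ i).
  assert (He : 0 < e) by (apply Rdiv_lt_0_compat; lra).
  exists ((2 ^ i / d) ^ i * (/ e ^ 2 + (c + 2) / e)).
  intros j s Hs.
  pose proof (freq_ge_2 j).
  assert (HA := alternating_summand (freq j) c ltac:(lra) ltac:(lra)).
  rewrite (Rabs_alternating _ (alternating_term n j Hn)) by lra.
  unfold term_family. fold c.
  replace ((-1) ^ i * (term_coef n j * summand_family (freq j) c i s))
    with (((-1) ^ i * summand_family (freq j) c i s) * term_coef n j) by ring.
  apply Rmult_le_compat; [| apply Rlt_le, term_coef_pos | | apply term_coef_le, Hn].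
  { rewrite <- (Rabs_alternating _ HA) by lra. apply Rabs_pos. }
  eapply Rle_trans;
    [apply (alternating_derive_n_le _ (derivative_family_summand (freq j) c) HA); lra|].
  assert (H0 := HA O (s / 2 ^ i) ltac:(apply Rdiv_lt_0_compat; lra)). simpl in H0.
  apply Rmult_le_compat; [apply pow_le, Rlt_le, Rdiv_lt_0_compat; lra | lra | |].
  - apply pow_incr. split; [apply Rlt_le, Rdiv_lt_0_compat; lra|].
    apply Rmult_le_compat_l; [lra | apply Rinv_le_contravar; lra].
  - apply summand_family_0_le; [lra | lra | split; [exact He|]].
    apply Rmult_le_compat_r; [apply Rlt_le, Rinv_0_lt_compat, H2i | exact Hs].
Qed.

Theorem proposition5p1 (n : nat) (hn : (1 <= n)%nat) :
  completely_monotonic (p_n n).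
Proof.
  set (M := fun j => / (INR (S j) * INR (S (S j)))).
  apply (completely_monotonic_of_family _ (fun m t => Series (fun j => term_family n j m t))).
  - intros t Ht. unfold p_n. rewrite <- Series_scal_l.
    apply Series_ext. intros j. symmetry. apply term_family_0, Ht.
  - apply (derivative_family_Series _ M).
    + intros j. apply derivative_family_term.
    + exact ex_series_inv_consecutive.
    + intros i d Hd. apply term_family_le; assumption.
  - apply alternating_Series; [intros j; apply alternating_term, hn|].
    intros m t Ht. destruct (term_family_le n m t hn Ht) as [K HK].
    apply (ex_series_dominated _ M K ex_series_inv_consecutive).
    intros j. apply HK, Rle_refl.
Qed.
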